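(* Let $P$ be a finite bipartite poset with partition sets $X,Y\subset P$, such that every non-identity morphism of $P$ goes from an element of $X$ to an element of $Y$. Let $C$ be a model category with finite coproducts and $F\colon P\to C$ a diagram valued in cofibrant objects. Assume that for all $y\in P$ the morphism \[\coprod_{\alpha\colon x\to y \in X/y}F(\alpha)\colon \coprod_{\alpha\colon x\to y \in X/y}F(x) \longrightarrow F(y)\] is a cofibration in $C$, where $X/y=X\times_P P/y$ is the relative over-category. Then $F$ is a cofibrant object of $\operatorname{Fun}(P,C)$ with the projective model structure (weak equivalences and fibrations defined objectwise). In particular, the colimit of $F$ coincides with the homotopy colimit of $F$. *)

From HB Require Import structures.
From mathcomp Require Import all_boot order.

Set Implicit Arguments. Unset Strict Implicit. Unset Printing Implicit Defensive.
Import Order.TTheory.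

Record Category := {
  ob :> Type;
  hom : ob -> ob -> Type;
  idm : forall a, hom a a;
  mcomp : forall a b e, hom b e -> hom a b -> hom a e;
  comp_assoc : forall a b e k (h : hom e k) (g : hom b e) (f : hom a b),
      mcomp h (mcomp g f) = mcomp (mcomp h g) f;
  comp_id_l : forall a b (f : hom a b), mcomp (idm b) f = f;
  comp_id_r : forall a b (f : hom a b), mcomp f (idm a) = f }.
Arguments hom {c} _ _.
Arguments idm {c} _.
Arguments mcomp {c a b e} _ _.

Section CatDefs.
Variable C : Category.

Definition MorClass := forall a b : C, hom a b -> Prop.

Definition is_coproduct (I : Type) (A : I -> C) (S : C) (inj : forall i, hom (A i) S) :=
  forall (T : C) (f : forall i, hom (A i) T),
    exists! u : hom S T, forall i, mcomp u (inj i) = f i.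
Definition is_product (I : Type) (A : I -> C) (S : C) (pr : forall i, hom S (A i)) :=
  forall (T : C) (f : forall i, hom T (A i)),
    exists! u : hom T S, forall i, mcomp (pr i) u = f i.
Definition is_pushout (a b c : C) (f : hom a b) (g : hom a c)
    (Q : C) (i1 : hom b Q) (i2 : hom c Q) :=
  mcomp i1 f = mcomp i2 g /\
  forall (T : C) (u1 : hom b T) (u2 : hom c T), mcomp u1 f = mcomp u2 g ->
    exists! u : hom Q T, mcomp u i1 = u1 /\ mcomp u i2 = u2.
Definition is_pullback (a b c : C) (f : hom b a) (g : hom c a)
    (Q : C) (p1 : hom Q b) (p2 : hom Q c) :=
  mcomp f p1 = mcomp g p2 /\
  forall (T : C) (u1 : hom T b) (u2 : hom T c), mcomp f u1 = mcomp g u2 ->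
    exists! u : hom T Q, mcomp p1 u = u1 /\ mcomp p2 u = u2.

Definition is_initial (z : C) := forall a : C, exists! u : hom z a, True.

Definition has_llp (a b x y : C) (i : hom a b) (p : hom x y) :=
  forall (top : hom a x) (bot : hom b y), mcomp p top = mcomp bot i ->
    exists l : hom b x, mcomp l i = top /\ mcomp p l = bot.

Definition is_retract (a b c e : C) (f : hom a b) (g : hom c e) :=
  exists (i : hom a c) (r : hom c a) (j : hom b e) (s : hom e b),
    mcomp r i = idm a /\ mcomp s j = idm b /\
    mcomp g i = mcomp j f /\ mcomp f r = mcomp s g.

Definition closed_cat (K : MorClass) :=
  (forall a, K a a (idm a)) /\
  (forall a b c (f : hom a b) (g : hom b c), K _ _ f -> K _ _ g -> K _ _ (mcomp g f)).
Definition closed_retract (K : MorClass) :=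
  forall a b c e (f : hom a b) (g : hom c e), is_retract f g -> K _ _ g -> K _ _ f.
End CatDefs.

Record ModelCategory := {
  mc_cat :> Category;
  W : MorClass mc_cat;
  Fib : MorClass mc_cat;
  Cof : MorClass mc_cat;
  mc_coprod : forall (I : finType) (A : I -> mc_cat),
      exists S inj, @is_coproduct mc_cat I A S inj;
  mc_prod : forall (I : finType) (A : I -> mc_cat),
      exists S pr, @is_product mc_cat I A S pr;
  mc_pushout : forall (a b c : mc_cat) (f : hom a b) (g : hom a c),
      exists Q i1 i2, is_pushout f g (Q := Q) i1 i2;
  mc_pullback : forall (a b c : mc_cat) (f : hom b a) (g : hom c a),
      exists Q p1 p2, is_pullback f g (Q := Q) p1 p2;
  mc_W_cat : closed_cat W; mc_Fib_cat : closed_cat Fib; mc_Cof_cat : closed_cat Cof;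
  mc_2of3 : forall a b c (f : hom a b) (g : hom b c),
      (W f -> W g -> W (mcomp g f)) /\
      (W f -> W (mcomp g f) -> W g) /\
      (W g -> W (mcomp g f) -> W f);
  mc_W_retract : closed_retract W; mc_Fib_retract : closed_retract Fib;
  mc_Cof_retract : closed_retract Cof;
  mc_lift1 : forall a b x y (i : hom a b) (p : hom x y),
      Cof i -> Fib p -> W p -> has_llp i p;
  mc_lift2 : forall a b x y (i : hom a b) (p : hom x y),
      Cof i -> W i -> Fib p -> has_llp i p;
  mc_fact1 : forall a b (f : hom a b), exists c (i : hom a c) (p : hom c b),
      f = mcomp p i /\ Cof i /\ W i /\ Fib p;
  mc_fact2 : forall a b (f : hom a b), exists c (i : hom a c) (p : hom c b),
      f = mcomp p i /\ Cof i /\ Fib p /\ W p }.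
Arguments W {m a b} _.
Arguments Fib {m a b} _.
Arguments Cof {m a b} _.

Definition cofibrant (M : ModelCategory) (A : M) :=
  forall (z : M) (u : hom z A), is_initial z -> Cof u.

Record diagram d (P : porderType d) (C : Category) := {
  dob :> P -> C;
  dmap : forall x y : P, (x <= y)%O -> hom (dob x) (dob y);
  dmap_id : forall x (h : (x <= x)%O), dmap h = idm (dob x);
  dmap_comp : forall x y z (h1 : (x <= y)%O) (h2 : (y <= z)%O) (h3 : (x <= z)%O),
      dmap h3 = mcomp (dmap h2) (dmap h1) }.

Record nattrans d (P : porderType d) (C : Category) (F G : diagram P C) := {
  ncomp :> forall x : P, hom (F x) (G x);
  nnat : forall (x y : P) (h : (x <= y)%O),
      mcomp (dmap G h) (ncomp x) = mcomp (ncomp y) (dmap F h) }.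

(* Cofibrancy in Fun(P, M) with the projective model structure: cofibrations are
   the maps with the left lifting property against objectwise trivial fibrations,
   so F is cofibrant iff every map from F into the target of an objectwise
   trivial fibration lifts through it (0 -> F has the LLP). Equality of natural
   transformations is componentwise. *)
Definition proj_cofibrant d (P : porderType d) (M : ModelCategory) (F : diagram P M) :=
  forall (G H : diagram P M) (p : nattrans G H) (f : nattrans F H),
    (forall x, Fib (p x) /\ W (p x)) ->
    exists g : nattrans F G, forall x, mcomp (p x) (g x) = f x.

Definition slice d (P : finPOrderType d) (X : {set P}) (y : P) :=
  {x : P | (x \in X) && (x <= y)%O}.
Definition slice_le d (P : finPOrderType d) (X : {set P}) (y : P)
    (a : slice X y) : (sval a <= y)%O :=
  proj2 (elimT andP (svalP a)).

(* A map F -> H lifts through an objectwise trivial fibration p : G -> H as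
   soon as components g x can be chosen compatibly.  Every strict relation of
   P goes from X to Y, so it suffices to lift on each F x by cofibrancy, and
   then, for each y, to lift once more on F y relative to the latching object
   coprod_{X/y} F x: the latching map being a cofibration, the new lift g y
   extends the ones already chosen on X/y, which is exactly naturality. *)
From mathcomp Require Import all_boot order.
From Stdlib Require Import IndefiniteDescription.

Set Implicit Arguments. Unset Strict Implicit. Unset Printing Implicit Defensive.
Import Order.TTheory.

Lemma dependent_choice (A : Type) (B : A -> Type) (R : forall x, B x -> Prop) :
  (forall x, exists y, R x y) -> exists f : forall x, B x, forall x, R x (f x).
Proof.
move=> hR; exists (fun x => proj1_sig (constructive_indefinite_description _ (hR x))).
by move=> x; exact: proj2_sig.
Qed.

Lemma initial_unique (C : Category) (z a : C) (u v : hom z a) :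
  is_initial z -> u = v.
Proof. by move=> /(_ a) [w [_ hw]]; rewrite -(hw u I) -(hw v I). Qed.

Lemma coproduct_hom_ext (C : Category) (I : Type) (A : I -> C) (S T : C)
    (inj : forall i, hom (A i) S) (u v : hom S T) :
  is_coproduct inj -> (forall i, mcomp u (inj i) = mcomp v (inj i)) -> u = v.
Proof.
move=> /(_ T (fun i => mcomp v (inj i))) [w [_ hw]] huv.
by rewrite -(hw u huv) -(hw v (fun=> erefl)).
Qed.

Section ModelCategoryLifts.
Variable M : ModelCategory.

Lemma exists_initial : exists z : M, is_initial z.
Proof.
have [S [inj cop]] := @mc_coprod M void (fun v : void => match v return M with end).
exists S => a; case: (cop a (fun v : void => match v return hom _ a with end)).
by move=> u [_ hu]; exists u; split => // v _; apply: hu => -[].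
Qed.

Lemma cofibrant_lift (A E B : M) (p : hom E B) (f : hom A B) :
  cofibrant A -> Fib p -> W p -> exists l : hom A E, mcomp p l = f.
Proof.
move=> cofA fibp wp; have [z hz] := exists_initial.
have [[u _] [top _]] := (hz A, hz E).
have [l [_ hl]] := mc_lift1 (cofA z u hz) fibp wp
  (top := top) (bot := f) (initial_unique _ _ hz).
by exists l.
Qed.

Lemma cofibration_copair_lift (I : Type) (A : I -> M) (S B E Z : M)
    (inj : forall i, hom (A i) S) (u : hom S B) (a : forall i, hom (A i) B)
    (p : hom E Z) (f : hom B Z) (e : forall i, hom (A i) E) :
  is_coproduct inj -> (forall i, mcomp u (inj i) = a i) ->
  Cof u -> Fib p -> W p -> (forall i, mcomp p (e i) = mcomp f (a i)) ->
  exists l : hom B E, mcomp p l = f /\ forall i, mcomp l (a i) = e i.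
Proof.
move=> cop hu cofu fibp wp hpe.
have [top [htop _]] := cop E e.
have square : mcomp p top = mcomp f u.
  apply: (coproduct_hom_ext cop) => i.
  by rewrite -!comp_assoc htop hu hpe.
have [l [hlu hpl]] := mc_lift1 cofu fibp wp square.
by exists l; split => // i; rewrite -hu comp_assoc hlu htop.
Qed.

End ModelCategoryLifts.

Lemma natural_of_lt d (P : porderType d) (C : Category) (F G : diagram P C)
    (g : forall x, hom (F x) (G x)) :
  (forall x y (h : (x <= y)%O), (x < y)%O ->
     mcomp (dmap G h) (g x) = mcomp (g y) (dmap F h)) ->
  forall x y (h : (x <= y)%O), mcomp (dmap G h) (g x) = mcomp (g y) (dmap F h).
Proof.
move=> hlt x y h; have := h; rewrite le_eqVlt => /orP [/eqP exy | lxy].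
  by subst y; rewrite !dmap_id comp_id_l comp_id_r.
exact: hlt.
Qed.

Section LatchingLift.
Variables (M : ModelCategory) (d : Order.disp_t) (P : finPOrderType d).
Variables (X : {set P}) (F G H : diagram P M) (p : nattrans G H) (f : nattrans F H).
Hypothesis hp : forall x, Fib (p x) /\ W (p x).

Lemma latching_lift (y : P) (g : forall x, hom (F x) (G x)) :
  (forall x, mcomp (p x) (g x) = f x) ->
  (forall (S : M) (inj : forall a : slice X y, hom (F (sval a)) S),
      is_coproduct inj -> forall u : hom S (F y),
      (forall a, mcomp u (inj a) = dmap F (slice_le a)) -> Cof u) ->
  exists l : hom (F y) (G y), mcomp (p y) l = f y /\
    forall a : slice X y,
      mcomp l (dmap F (slice_le a)) = mcomp (dmap G (slice_le a)) (g (sval a)).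
Proof.
move=> hg hlatch.
have [S [inj cop]] := mc_coprod (fun a : slice X y => F (sval a)).
have [u [hu _]] := cop (F y) (fun a => dmap F (slice_le a)).
have [fibp wp] := hp y.
apply: (cofibration_copair_lift cop hu (hlatch S inj cop u hu) fibp wp) => a.
by rewrite comp_assoc -nnat -comp_assoc hg nnat.
Qed.

End LatchingLift.

Theorem lemma6p21 (M : ModelCategory) (d : Order.disp_t) (P : finPOrderType d)
  (X Y : {set P})
  (hdisj : X :&: Y = set0) (hcover : X :|: Y = setT)
  (hbip : forall x y : P, (x < y)%O -> x \in X /\ y \in Y)
  (F : diagram P M)
  (hcofob : forall x : P, cofibrant (F x))
  (hlatch : forall (y : P) (S : M) (inj : forall a : slice X y, hom (F (sval a)) S),
      @is_coproduct M (slice X y) (fun a : slice X y => F (sval a)) S inj ->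
      forall u : hom S (F y),
        (forall a : slice X y, mcomp u (inj a) = dmap F (slice_le a)) ->
        Cof u) :
  proj_cofibrant F.
Proof.
move=> G H p f hp.
have [g0 hg0] := dependent_choice (fun x =>
  cofibrant_lift (f x) (hcofob x) (hp x).1 (hp x).2).
have [g hg] := dependent_choice (fun y => latching_lift hp hg0 (hlatch y)).
have hslice x y (hx : x \in X) (h : (x <= y)%O) :
    mcomp (g y) (dmap F h) = mcomp (dmap G h) (g0 x).
  have hxy : (x \in X) && (x <= y)%O by rewrite hx h.
  have := (hg y).2 (exist _ x hxy).
  by have -> : slice_le (exist _ x hxy) = h by exact: eq_irrelevance.
(* X/x contains x itself, so g agrees with g0 on X. *)
have gX x (hx : x \in X) : g x = g0 x.
  by have := hslice x x hx (lexx x); rewrite !dmap_id comp_id_l comp_id_r.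
have natg : forall x y (h : (x <= y)%O),
    mcomp (dmap G h) (g x) = mcomp (g y) (dmap F h).
  apply: natural_of_lt => x y h /(hbip x y) [hx _].
  by rewrite gX // hslice.
by exists (Build_nattrans natg) => x; exact: (hg x).1.
Qed.
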